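(* Let $\varphi:[0,\infty)\to(0,\infty)$ be continuous and increasing with $\int_0^\infty\frac{\varphi(t)}{1+t^2}dt=\infty$. (i) If $\varphi$ is normally growing, then there is $c>0$ with $\int_0^a\frac{\varphi(x)}{x^2+1}dx\ge c\,\frac{\varphi(a)}{a}$ for all $a\ge1$. (ii) If $\varphi$ is rapidly growing, then there is $C>0$ with $\int_0^a\frac{\varphi(x)}{x^2+1}dx\le C\,\frac{\varphi(a)}{a}$ for all $a\ge1$.
   Context: $\varphi$ is normally growing if for some $A>0$ the function $\varphi(x)/x^2$ is decreasing on $[A,\infty)$ and $\varphi(x)$ is a convex function of $\log x$ on $[A,\infty)$; rapidly growing if for some $\varepsilon>0$ and $A>0$ the function $\varphi(x)/x^{1+\varepsilon}$ is increasing on $[A,\infty)$. *)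

From Stdlib Require Import Reals.
From Coquelicot Require Import Coquelicot.
Open Scope R_scope.

(* phi : [0,oo) -> R, represented as a total function R -> R; only values on
   [0,oo) matter. *)

Definition cont_on_nonneg (phi : R -> R) : Prop :=
  forall x, 0 <= x -> forall eps, 0 < eps -> exists delta, 0 < delta /\
    forall y, 0 <= y -> Rabs (y - x) < delta -> Rabs (phi y - phi x) < eps.

(* "increasing" on [0,oo), read as non-decreasing *)
Definition incr_on_nonneg (phi : R -> R) : Prop :=
  forall x y, 0 <= x -> x <= y -> phi x <= phi y.

Definition pos_on_nonneg (phi : R -> R) : Prop :=
  forall x, 0 <= x -> 0 < phi x.

Definition divergent_integral (phi : R -> R) : Prop :=
  is_lim (fun b => RInt (fun t => phi t / (1 + t ^ 2)) 0 b) p_infty p_infty.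

(* normally growing: for some A>0, phi(x)/x^2 is decreasing on [A,oo) and
   phi is a convex function of log x on [A,oo), i.e. s |-> phi (exp s) is
   convex on [ln A, oo). *)
Definition normally_growing (phi : R -> R) : Prop :=
  exists A, 0 < A /\
    (forall x y, A <= x -> x <= y -> phi y / y ^ 2 <= phi x / x ^ 2) /\
    (forall s t l, ln A <= s -> ln A <= t -> 0 <= l <= 1 ->
       phi (exp (l * s + (1 - l) * t)) <= l * phi (exp s) + (1 - l) * phi (exp t)).

Definition rapidly_growing (phi : R -> R) : Prop :=
  exists eps A, 0 < eps /\ 0 < A /\
    (forall x y, A <= x -> x <= y ->
       phi x / Rpower x (1 + eps) <= phi y / Rpower y (1 + eps)).

(* (i) On [a/2, a] the integrand is at least phi(a/2) / (2 a^2), so the integral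
   up to a is at least phi(a/2) / (4 a).  Since phi(x)/x^2 eventually decreases,
   phi(a) <= 4 phi(a/2) for large a, and for bounded a monotonicity bounds the
   ratio phi(a) / phi(a/2); hence phi(a/2) >= k phi(a) for some k > 0.
   (ii) Monotonicity of phi(x)/x^(1+eps) gives phi(x) <= phi(a) (x/a)^(1+eps)
   on [A, a], so the integral of phi(x)/x^2 over [A, a] is at most
   phi(a) / (eps a); on [0, max A 1] the integral is at most a constant times
   phi(a)/a because phi(x)/x is nondecreasing from A on. *)
From Stdlib Require Import Reals Lra.
From Coquelicot Require Import Coquelicot.
Open Scope R_scope.

Lemma RInt_const_mul (c u v : R) : RInt (fun _ => c) u v = c * (v - u).
Proof. rewrite RInt_const. unfold scal; simpl; unfold mult; simpl. ring. Qed.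

Lemma RInt_ge_const (f : R -> R) (c u v : R) :
  u <= v -> ex_RInt f u v -> (forall x, u < x < v -> c <= f x) ->
  c * (v - u) <= RInt f u v.
Proof.
  intros Huv Hf Hc. rewrite <- RInt_const_mul.
  apply RInt_le; auto. apply ex_RInt_const.
Qed.

Lemma RInt_le_const (f : R -> R) (c u v : R) :
  u <= v -> ex_RInt f u v -> (forall x, u < x < v -> f x <= c) ->
  RInt f u v <= c * (v - u).
Proof.
  intros Huv Hf Hc. rewrite <- RInt_const_mul.
  apply RInt_le; auto. apply ex_RInt_const.
Qed.

Lemma Rpower_1_plus (x e : R) : 0 < x -> Rpower x (1 + e) = x * Rpower x e.
Proof. intros Hx. rewrite Rpower_plus, Rpower_1 by exact Hx. reflexivity. Qed.

Lemma is_RInt_Rpower_div (e u v : R) : 0 < e -> 0 < u <= v ->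
  is_RInt (fun x => Rpower x e / x) u v ((Rpower v e - Rpower u e) / e).
Proof.
  intros He Huv.
  replace ((Rpower v e - Rpower u e) / e)
    with (minus (exp (e * ln v) / e) (exp (e * ln u) / e)).
  2: { unfold minus, plus, opp; simpl. unfold Rpower. field. lra. }
  apply (@is_RInt_derive R_CompleteNormedModule (fun x => exp (e * ln x) / e)
           (fun x => exp (e * ln x) / x));
    intros x Hx; rewrite Rmin_left, Rmax_right in Hx by lra.
  - auto_derive; [lra | field; lra].
  - apply (@ex_derive_continuous R_AbsRing R_NormedModule). auto_derive. lra.
Qed.

Lemma quadratic_decay_doubling (phi : R -> R) (A a : R) :
  (forall x y, A <= x -> x <= y -> phi y / y ^ 2 <= phi x / x ^ 2) ->
  0 < A -> 2 * A <= a -> phi a <= 4 * phi (a / 2).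
Proof.
  intros Hdecay HA Ha.
  replace (phi a) with (phi a / a ^ 2 * a ^ 2) by (field; lra).
  replace (4 * phi (a / 2)) with (phi (a / 2) / (a / 2) ^ 2 * a ^ 2) by (field; lra).
  apply Rmult_le_compat_r; [nra | apply Hdecay; lra].
Qed.

Section WeightedIntegral.

Variable phi : R -> R.
Hypothesis phi_cont : cont_on_nonneg phi.
Hypothesis phi_incr : incr_on_nonneg phi.
Hypothesis phi_pos : pos_on_nonneg phi.

Local Notation w := (fun x => phi x / (x ^ 2 + 1)).

Lemma continuity_pt_Rmax0 x : continuity_pt (fun y => phi (Rmax 0 y)) x.
Proof.
  intros eps Heps.
  destruct (phi_cont (Rmax 0 x) (Rmax_l 0 x) eps Heps) as [d [Hd H]].
  exists d; split; [exact Hd |].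
  intros y [_ Hy]. simpl in *. unfold R_dist in *.
  apply H; [apply Rmax_l |].
  eapply Rle_lt_trans; [| exact Hy].
  unfold Rmax; destruct (Rle_dec 0 y), (Rle_dec 0 x);
    unfold Rabs; repeat destruct Rcase_abs; lra.
Qed.

Lemma ex_RInt_weight u v : 0 <= u <= v -> ex_RInt w u v.
Proof.
  intros Huv.
  apply ex_RInt_ext with (f := fun x => phi (Rmax 0 x) / (x ^ 2 + 1)).
  { intros x Hx. rewrite Rmin_left, Rmax_right in Hx by lra.
    rewrite Rmax_right by lra. reflexivity. }
  apply (@ex_RInt_continuous R_CompleteNormedModule). intros z _.
  apply continuity_pt_filterlim, continuity_pt_div;
    [apply continuity_pt_Rmax0 | reg | nra].
Qed.

Lemma RInt_weight_le b : 0 <= b -> RInt w 0 b <= phi b * b.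
Proof.
  intros Hb. replace (phi b * b) with (phi b * (b - 0)) by ring.
  apply RInt_le_const; [lra | apply ex_RInt_weight; lra |].
  intros x Hx. apply Rle_div_l; [nra |].
  assert (phi x <= phi b) by (apply phi_incr; lra).
  assert (0 < phi b) by (apply phi_pos; lra).
  nra.
Qed.

Lemma RInt_weight_ge_half a : 1 <= a -> phi (a / 2) / (4 * a) <= RInt w 0 a.
Proof.
  intros Ha.
  rewrite <- (RInt_Chasles w 0 (a / 2) a) by (apply ex_RInt_weight; lra).
  assert (Hfirst : 0 <= RInt w 0 (a / 2)).
  { apply RInt_ge_0; [lra | apply ex_RInt_weight; lra |].
    intros x Hx. apply Rlt_le, Rdiv_lt_0_compat; [apply phi_pos; lra | nra]. }
  assert (Hsecond : phi (a / 2) / (a ^ 2 + 1) * (a - a / 2) <= RInt w (a / 2) a).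
  { apply RInt_ge_const; [lra | apply ex_RInt_weight; lra |].
    intros x Hx. unfold Rdiv.
    apply Rmult_le_compat; [apply Rlt_le, phi_pos; lra | |
      apply phi_incr; lra | apply Rinv_le_contravar; nra].
    apply Rlt_le, Rinv_0_lt_compat. nra. }
  assert (0 < phi (a / 2)) by (apply phi_pos; lra).
  assert (phi (a / 2) / (4 * a) <= phi (a / 2) / (a ^ 2 + 1) * (a - a / 2)).
  { apply Rmult_le_reg_r with (4 * a * (a ^ 2 + 1)); [nra |].
    replace (phi (a / 2) / (4 * a) * (4 * a * (a ^ 2 + 1)))
      with (phi (a / 2) * (a ^ 2 + 1)) by (field; lra).
    replace (phi (a / 2) / (a ^ 2 + 1) * (a - a / 2) * (4 * a * (a ^ 2 + 1)))
      with (phi (a / 2) * (2 * a ^ 2)) by (field; nra).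
    apply Rmult_le_compat_l; nra. }
  apply Rle_trans with (0 + phi (a / 2) / (a ^ 2 + 1) * (a - a / 2)); [lra |].
  apply Rplus_le_compat; assumption.
Qed.

Lemma exists_doubling_constant A :
  0 < A -> (forall x y, A <= x -> x <= y -> phi y / y ^ 2 <= phi x / x ^ 2) ->
  exists k, 0 < k /\ forall a, 0 <= a -> phi a <= k * phi (a / 2).
Proof.
  intros HA Hdecay.
  assert (P0 : 0 < phi 0) by (apply phi_pos; lra).
  exists (Rmax 4 (phi (2 * A) / phi 0)).
  split; [apply Rlt_le_trans with 4; [lra | apply Rmax_l] |].
  intros a Ha.
  assert (0 < phi (a / 2)) by (apply phi_pos; lra).
  destruct (Rle_lt_dec (2 * A) a) as [Hlarge | Hsmall].
  - apply Rle_trans with (4 * phi (a / 2));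
      [apply quadratic_decay_doubling with A; assumption |].
    apply Rmult_le_compat_r; [lra | apply Rmax_l].
  - apply Rle_trans with (phi (2 * A) / phi 0 * phi (a / 2)).
    + assert (phi a <= phi (2 * A)) by (apply phi_incr; lra).
      assert (phi 0 <= phi (a / 2)) by (apply phi_incr; lra).
      assert (0 <= phi (2 * A) / phi 0)
        by (apply Rlt_le, Rdiv_lt_0_compat; [apply phi_pos |]; lra).
      replace (phi a) with (phi a / phi 0 * phi 0) by (field; lra).
      apply Rmult_le_compat; try lra.
      * apply Rlt_le, Rdiv_lt_0_compat; [apply phi_pos |]; lra.
      * unfold Rdiv. apply Rmult_le_compat_r; [apply Rlt_le, Rinv_0_lt_compat |]; lra.
    + apply Rmult_le_compat_r; [lra | apply Rmax_r].
Qed.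

Lemma weighted_integral_lower_bound :
  normally_growing phi ->
  exists c, 0 < c /\ forall a, 1 <= a -> RInt w 0 a >= c * (phi a / a).
Proof.
  intros [A [HA [Hdecay _]]].
  destruct (exists_doubling_constant A HA Hdecay) as [k [Hk Hdouble]].
  exists (/ (4 * k)). split; [apply Rinv_0_lt_compat; lra |].
  intros a Ha. apply Rle_ge.
  apply Rle_trans with (phi (a / 2) / (4 * a)); [| apply RInt_weight_ge_half; exact Ha].
  replace (/ (4 * k) * (phi a / a)) with (phi a / k / (4 * a)) by (field; lra).
  unfold Rdiv at 1 3. apply Rmult_le_compat_r; [apply Rlt_le, Rinv_0_lt_compat; lra |].
  apply Rle_div_l; [exact Hk |]. rewrite Rmult_comm. apply Hdouble. lra.
Qed.

Section RapidGrowth.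

Variables e A : R.
Hypothesis e_pos : 0 < e.
Hypothesis A_pos : 0 < A.
Hypothesis phi_rapid : forall x y, A <= x -> x <= y ->
  phi x / Rpower x (1 + e) <= phi y / Rpower y (1 + e).

Lemma rapid_growth_ratio_mono x y : A <= x -> x <= y -> phi x / x <= phi y / y.
Proof.
  intros Hx Hxy.
  assert (Hpx : 0 < Rpower x e) by apply exp_pos.
  assert (Hpy : 0 < Rpower y e) by apply exp_pos.
  assert (Rpower x e <= Rpower y e) by (apply Rle_Rpower_l; lra).
  replace (phi x / x) with (phi x / Rpower x (1 + e) * Rpower x e)
    by (rewrite Rpower_1_plus by lra; field; lra).
  replace (phi y / y) with (phi y / Rpower y (1 + e) * Rpower y e)
    by (rewrite Rpower_1_plus by lra; field; lra).
  apply Rmult_le_compat; try lra; [| apply phi_rapid; lra].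
  apply Rlt_le, Rdiv_lt_0_compat; [apply phi_pos; lra | apply exp_pos].
Qed.

Lemma RInt_weight_tail_le u a : A <= u -> u <= a -> RInt w u a <= phi a / a / e.
Proof.
  intros Hu Hua.
  set (K := phi a / Rpower a (1 + e)).
  assert (HK : 0 < K) by (apply Rdiv_lt_0_compat; [apply phi_pos; lra | apply exp_pos]).
  assert (Hint : is_RInt (fun x => K * (Rpower x e / x)) u a
                   (K * ((Rpower a e - Rpower u e) / e)))
    by exact (is_RInt_scal _ _ _ K _ (is_RInt_Rpower_div e u a e_pos ltac:(lra))).
  apply Rle_trans with (K * ((Rpower a e - Rpower u e) / e)).
  - rewrite <- (is_RInt_unique _ _ _ _ Hint).
    apply RInt_le; [lra | apply ex_RInt_weight; lra | eexists; exact Hint |].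
    intros x Hx.
    assert (Hpx : 0 < Rpower x e) by apply exp_pos.
    assert (Hbound : phi x <= K * (x * Rpower x e)).
    { rewrite <- Rpower_1_plus by lra. apply Rle_div_l; [apply exp_pos |].
      apply phi_rapid; lra. }
    apply Rle_div_l; [nra |].
    replace (K * (Rpower x e / x) * (x ^ 2 + 1))
      with (K * (x * Rpower x e) + K * Rpower x e / x) by (field; lra).
    assert (0 <= K * Rpower x e / x) by (apply Rlt_le, Rdiv_lt_0_compat; nra).
    lra.
  - assert (0 < Rpower u e) by apply exp_pos.
    assert (0 < Rpower a e) by apply exp_pos.
    replace (phi a / a / e) with (K * (Rpower a e / e))
      by (unfold K; rewrite Rpower_1_plus by lra; field; repeat split; lra).
    apply Rmult_le_compat_l; [lra |].
    unfold Rdiv. apply Rmult_le_compat_r; [apply Rlt_le, Rinv_0_lt_compat |]; lra.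
Qed.

End RapidGrowth.

Lemma weighted_integral_upper_bound :
  rapidly_growing phi ->
  exists C, 0 < C /\ forall a, 1 <= a -> RInt w 0 a <= C * (phi a / a).
Proof.
  intros [e [A [He [HA Hrapid]]]].
  set (B := Rmax A 1).
  assert (HB1 : 1 <= B) by apply Rmax_r.
  assert (HBA : A <= B) by apply Rmax_l.
  assert (He' : 0 < / e) by (apply Rinv_0_lt_compat; exact He).
  exists (B ^ 2 + / e). split; [nra |].
  intros a Ha.
  assert (Hratio : 0 < phi a / a) by (apply Rdiv_lt_0_compat; [apply phi_pos |]; lra).
  destruct (Rle_lt_dec a B) as [Hsmall | Hlarge].
  - apply Rle_trans with (phi a * a); [apply RInt_weight_le; lra |].
    replace (phi a * a) with (a ^ 2 * (phi a / a)) by (field; lra).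
    apply Rmult_le_compat_r; nra.
  - rewrite <- (RInt_Chasles w 0 B a) by (apply ex_RInt_weight; lra).
    assert (Hhead : RInt w 0 B <= B ^ 2 * (phi a / a)).
    { apply Rle_trans with (phi B * B); [apply RInt_weight_le; lra |].
      replace (phi B * B) with (B ^ 2 * (phi B / B)) by (field; lra).
      apply Rmult_le_compat_l; [nra |].
      apply (rapid_growth_ratio_mono e A); auto; lra. }
    assert (Htail : RInt w B a <= phi a / a / e)
      by (apply (RInt_weight_tail_le e A); auto; lra).
    replace ((B ^ 2 + / e) * (phi a / a)) with (B ^ 2 * (phi a / a) + phi a / a / e)
      by (field; lra).
    apply Rplus_le_compat; assumption.
Qed.

End WeightedIntegral.

Theorem lemma4 (phi : R -> R) :
  cont_on_nonneg phi -> incr_on_nonneg phi -> pos_on_nonneg phi ->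
  divergent_integral phi ->
  (normally_growing phi ->
     exists c, 0 < c /\ forall a, 1 <= a ->
       RInt (fun x => phi x / (x ^ 2 + 1)) 0 a >= c * (phi a / a)) /\
  (rapidly_growing phi ->
     exists C, 0 < C /\ forall a, 1 <= a ->
       RInt (fun x => phi x / (x ^ 2 + 1)) 0 a <= C * (phi a / a)).
Proof.
  intros Hcont Hincr Hpos _. split.
  - exact (weighted_integral_lower_bound phi Hcont Hincr Hpos).
  - exact (weighted_integral_upper_bound phi Hcont Hincr Hpos).
Qed.
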